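(* Let $G$ be a median graph in $\mathcal{U}_3$ with $n\ge 3$ vertices and $v_0$ its unique vertex lying in every majority halfspace. If $u,v$ are vertices different from $v_0$ with $L_{v_0,u}\cap L_{v_0,v}=\emptyset$, then $v_0\in I(u,v)$, i.e. $d(u,v)=d(u,v_0)+d(v_0,v)$.
   Context: Graphs are finite, simple, connected, undirected; $d$ is shortest-path distance; $I(u,v)=\{x:d(u,x)+d(x,v)=d(u,v)\}$; a graph is median if every triple $x,y,z$ has $|I(x,y)\cap I(y,z)\cap I(z,x)|=1$. $\Theta$-classes: classes of the reflexive–transitive closure of the relation on edges ''opposite edges of a 4-cycle''; deleting a $\Theta$-class $E_i$ of a median graph leaves two components with vertex sets (halfspaces) $H_i',H_i''$. $\mathcal{U}_3$ is the family of median graphs with $n$ vertices in which every $\Theta$-class satisfies $\min\{|H_i'|,|H_i''|\}<n/3$; the larger halfspace is the majority halfspace. For $u\ne v$, the ladder set $L_{u,v}$ is the set of $\Theta$-classes $E_i$ such that $u,v$ lie in different halfspaces of $E_i$ and $u$ is an endpoint of an edge of $E_i$. *)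

From mathcomp Require Import all_boot.
Set Implicit Arguments. Unset Strict Implicit. Unset Printing Implicit Defensive.

Section Graph.
Variables (T : finType) (e : rel T).

Definition simple_graph : Prop := symmetric e /\ irreflexive e.
Definition connected_graph : Prop := forall x y : T, connect e x y.

Definition walkb (x y : T) (n : nat) : bool :=
  [exists p : n.-tuple T, path e x p && (last x p == y)].

(* shortest-path distance: least n with a walk of length n
   (in a connected graph always < #|T|) *)
Definition dist (x y : T) : nat := find (walkb x y) (iota 0 #|T|).

Definition interval (u v : T) : {set T} :=
  [set x | dist u x + dist x v == dist u v].

Definition median_graph : Prop :=
  forall x y z : T, #|interval x y :&: interval y z :&: interval z x| = 1.

(* oriented edges (a,b) and (c,d) are opposite edges of the 4-cycle a-b-d-c-a *)
Definition opp_sq (p q : T * T) : bool :=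
  [&& e p.1 p.2, e q.1 q.2, e p.1 q.1, e p.2 q.2 &
      uniq [:: p.1; p.2; q.1; q.2]].

(* one step of the Theta relation on oriented edges; reversing the orientation
   is included so that classes are classes of unoriented edges *)
Definition theta_step : rel (T * T) :=
  fun p q => ((q == (p.2, p.1)) && e p.1 p.2) || opp_sq p q.

Definition theta (p q : T * T) : bool := connect theta_step p q.

Definition halfspace (a b : T) : {set T} :=
  [set x | connect (fun y z => e y z && ~~ theta (a, b) (y, z)) a x].

(* (a,b) is an edge whose Theta-class lies in the ladder set L_{u,v}:
   u and v lie in different halfspaces of the class, and u is an endpoint
   of an edge of the class *)
Definition in_ladder (u v a b : T) : Prop :=
  e a b /\
  ((u \in halfspace a b /\ v \in halfspace b a) \/
   (u \in halfspace b a /\ v \in halfspace a b)) /\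
  exists x, e u x /\ theta (a, b) (u, x).

Definition in_U3 : Prop :=
  forall a b, e a b -> 3 * minn #|halfspace a b| #|halfspace b a| < #|T|.

Definition in_all_majority (w : T) : Prop :=
  forall a b, e a b -> #|halfspace b a| < #|halfspace a b| -> w \in halfspace a b.

End Graph.

From mathcomp Require Import all_boot zify.
Set Implicit Arguments. Unset Strict Implicit. Unset Printing Implicit Defensive.

(* Let m be the median of u, v and v0. If m <> v0, the neighbour x of v0 on a
   geodesic from v0 to m is strictly closer than v0 to both u and v, because m
   lies on geodesics from v0 to u and to v. In a median graph the Theta-class
   of the edge v0x separates exactly the vertices closer to v0 from those
   closer to x, so this class lies in both L_{v0,u} and L_{v0,v}. Hence
   m = v0, i.e. v0 lies in I(u,v). *)

Lemma connect_invariant (U : finType) (r : rel U) (P : U -> Prop) :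
  (forall a b, P a -> r a b -> P b) -> forall a b, connect r a b -> P a -> P b.
Proof.
move=> Pr a b /connectP [p]; elim: p a => [|c p IHp] a /=; first by move=> _ ->.
by case/andP=> rac pp lastp Pa; exact: IHp pp lastp (Pr _ _ Pa rac).
Qed.

Section MedianGraph.
Variables (T : finType) (e : rel T).
Hypotheses (simple_e : simple_graph e) (connected_e : connected_graph e).

Let esym : symmetric e := proj1 simple_e.
Let eirr : irreflexive e := proj2 simple_e.

Fixpoint walk (x y : T) (n : nat) : Prop :=
  if n is n'.+1 then exists z, e x z /\ walk z y n' else x = y.

Lemma walkbP x y n : walkb e x y n <-> walk x y n.
Proof.
elim: n x => [|n IHn] x /=.
  split; first by case/existsP=> p; rewrite (tuple0 p) /= => /eqP.
  by move=> ->; apply/existsP; exists [tuple]; rewrite /= eqxx.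
split.
  case/existsP=> p; case: p / tupleP => z q /= /andP [/andP [exz pq] lq].
  by exists z; split=> //; apply/IHn/existsP; exists q; rewrite pq lq.
case=> z [exz /IHn /existsP [q /andP [pq lq]]]; apply/existsP.
by exists [tuple of z :: q]; rewrite /= exz pq.
Qed.

Lemma walk_cat x y z m n : walk x y m -> walk y z n -> walk x z (m + n).
Proof.
elim: m x => [|m IHm] x /=; first by move=> ->.
by case=> w [exw wy] yz; exists w; split=> //; exact: IHm yz.
Qed.

Lemma walk_rcons x y z n : walk x y n -> e y z -> walk x z n.+1.
Proof.
elim: n x => [|n IHn] x /=; first by move=> -> eyz; exists z.
by case=> w [exw wy] eyz; exists w; split=> //; exact: IHn.
Qed.

Lemma walk_sym x y n : walk x y n -> walk y x n.
Proof.
elim: n x y => [|n IHn] x y /=; first by move=> ->.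
by case=> z [exz zy]; apply: walk_rcons (IHn _ _ zy) _; rewrite esym.
Qed.

Lemma path_walk x p : path e x p -> walk x (last x p) (size p).
Proof.
elim: p x => [|z p IHp] x //= /andP [exz pp].
by exists z; split=> //; exact: IHp.
Qed.

Lemma short_walk_exists x y : exists2 n, n < #|T| & walk x y n.
Proof.
case/connectP: (connected_e x y) => p pp ->.
case/shortenP: pp => q pq uq _; exists (size q); last exact: path_walk.
by have := max_card (mem (x :: q)); rewrite (card_uniqP uq) /=.
Qed.

Local Notation d := (dist e).

Lemma has_walkb x y : has (walkb e x y) (iota 0 #|T|).
Proof.
have [n ltnT xy] := short_walk_exists x y.
by apply/hasP; exists n; [rewrite mem_iota | apply/walkbP].
Qed.

Lemma dist_lt_card x y : d x y < #|T|.
Proof. by have := has_walkb x y; rewrite has_find size_iota. Qed.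

Lemma dist_walk x y : walk x y (d x y).
Proof.
have := nth_find 0 (has_walkb x y).
by rewrite nth_iota ?dist_lt_card // add0n; move/walkbP.
Qed.

Lemma dist_min x y n : walk x y n -> d x y <= n.
Proof.
move=> xy; case: (ltnP n #|T|) => ltnT; last by have := dist_lt_card x y; lia.
rewrite leqNgt; apply/negP => /(before_find 0).
by rewrite nth_iota // add0n => /negbT/negP; apply; apply/walkbP.
Qed.

Lemma dist0_eq x y : d x y = 0 -> x = y.
Proof. by move=> dxy; have := dist_walk x y; rewrite dxy. Qed.

Lemma distxx x : d x x = 0.
Proof. by apply/eqP; rewrite -leqn0; exact: (@dist_min x x 0). Qed.

Lemma dist_edge x y : e x y -> d x y = 1.
Proof.
move=> exy; have : d x y <= 1 by apply: dist_min; exists y.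
case dxy: (d x y) => [|[|k]] // _; move/dist0_eq: dxy => xy.
by rewrite xy eirr in exy.
Qed.

Lemma dist_triangle x y z : d x z <= d x y + d y z.
Proof. by apply: dist_min; apply: walk_cat; apply: dist_walk. Qed.

Lemma distC x y : d x y = d y x.
Proof.
by apply/eqP; rewrite eqn_leq !dist_min //; apply: walk_sym; apply: dist_walk.
Qed.

Lemma dist_geodesic_step x y k : d x y = k.+1 -> exists z, e x z /\ d z y = k.
Proof.
move=> dxy; have := dist_walk x y; rewrite dxy /= => -[z [exz zy]].
exists z; split=> //; have := dist_min zy; have := dist_triangle x z y.
by rewrite (dist_edge exz); lia.
Qed.

Lemma intervalC x y : interval e x y = interval e y x.
Proof.
by apply/setP=> z; rewrite !inE addnC (distC x) (distC z) (distC x y).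
Qed.

Hypothesis median_e : median_graph e.

Lemma dist_edge_neq w a b : e a b -> d w a <> d w b.
Proof.
move=> eab dwab; have := median_e w a b.
set M := interval e w a :&: interval e a b :&: interval e b w.
have [->|[m]] := set_0Vmem M; first by rewrite cards0.
rewrite !inE (dist_edge eab) => /andP [/andP [/eqP wma /eqP amb] /eqP bmw] _.
have := distC w a; have := distC w b; have := distC b a.
rewrite (dist_edge eab); case dam: (d a m) => [|k] => *.
  by move/dist0_eq: dam => am; move: bmw; rewrite -am; lia.
have /dist0_eq mb : d m b = 0 by lia.
by move: wma; rewrite mb; lia.
Qed.
Arguments dist_edge_neq w [a b].

Lemma edge_dist_cases w s t : e s t -> d w t = (d w s).+1 \/ d w s = (d w t).+1.
Proof.
move=> est; have := dist_edge_neq w est; have := dist_triangle w s t.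
have := dist_triangle w t s; have := dist_edge est.
have : d t s = 1 by rewrite distC dist_edge.
lia.
Qed.
Arguments edge_dist_cases w [s t].

Definition square (a b c c' : T) : Prop :=
  [/\ e a b, e b c, e c c', e c' a & a != c /\ b != c'].

Lemma square_swap a b c c' : square a b c c' -> square b a c' c.
Proof. by case=> eab ebc ecc' ec'a [ac bc']; split; rewrite 1?esym. Qed.

Lemma lower_common_neighbor_median w a z c :
  e a z -> e z c -> d a c = 2 -> d w z < d w a -> d w z < d w c ->
  z \in interval e a c :&: interval e c w :&: interval e w a.
Proof.
move=> eaz ezc dac za zc.
have := edge_dist_cases w eaz; have := edge_dist_cases w ezc.
rewrite !inE (dist_edge eaz) (dist_edge ezc) (distC c) (distC z a).
by rewrite (dist_edge ezc) (dist_edge eaz) (distC z w) (distC c w) dac; lia.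
Qed.

(* Two distinct common neighbours of a and c that both lie below a and c
   would both be medians of a, c and w. *)
Lemma square_descends w a b c c' :
  square a b c c' -> d w b < d w a -> d w c' < d w a -> d w c < d w b.
Proof.
case=> eab ebc ecc' ec'a [ac bc'] ba c'a.
have ec'c : e c' c by rewrite esym.
have eac' : e a c' by rewrite esym.
have dac : d a c = 2.
  have := dist_triangle a b c; rewrite (dist_edge eab) (dist_edge ebc).
  have := dist_edge_neq a ebc; rewrite (dist_edge eab).
  case: (d a c) (@dist0_eq a c) => [/(_ erefl) ac0|]; last by lia.
  by rewrite ac0 eqxx in ac.
rewrite ltnNge; apply/negP => bc.
have := edge_dist_cases w eab; have := edge_dist_cases w ebc.
have := edge_dist_cases w eac'; have := edge_dist_cases w ec'c => *.
have bm := lower_common_neighbor_median eab ebc dac ba (ltac:(lia)).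
have c'm := lower_common_neighbor_median eac' ec'c dac c'a (ltac:(lia)).
have : [set b; c'] \subset interval e a c :&: interval e c w :&: interval e w a.
  by apply/subsetP=> z /set2P [] ->.
by move/subset_leq_card; rewrite cards2 bc' median_e.
Qed.

Definition closer (x y s : T) : bool := d x s < d y s.

Lemma closerNC x y s : e x y -> closer y x s = ~~ closer x y s.
Proof.
move=> exy; have := dist_edge_neq s exy.
by rewrite /closer !(distC s); lia.
Qed.

Lemma closer_dist x y s : e x y -> closer x y s -> d y s = (d x s).+1.
Proof.
move=> exy; have := edge_dist_cases s exy.
by rewrite /closer !(distC s); lia.
Qed.

(* If q2 were on the side of x as well, p2 would have two neighbours p1, q2
   below it towards x; descending the square towards x and then towards y
   gives contradictory distances to y. *)
Lemma square_across x y p1 p2 q1 q2 : e x y -> square p1 p2 q2 q1 ->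
  closer x y p1 -> ~~ closer x y p2 -> ~~ closer x y q2.
Proof.
move=> exy sq xp1 yp2; apply/negP => xq2.
have eyx : e y x by rewrite esym.
rewrite -closerNC // in yp2; have := closer_dist exy xp1.
have := closer_dist eyx yp2; have := closer_dist exy xq2.
case: (sq) => ep1p2 ep2q2 _ eq1p1 _.
have := edge_dist_cases x ep1p2; have := edge_dist_cases y ep1p2.
have := edge_dist_cases x ep2q2; have := edge_dist_cases y ep2q2 => *.
have q1x : d x q1 < d x p1.
  by apply: (square_descends (square_swap sq)); lia.
have := edge_dist_cases x eq1p1; have := dist_triangle y x q1.
rewrite (dist_edge eyx) => *.
have := square_descends sq (_ : d y p2 < d y p1) (_ : d y q1 < d y p1).
by lia.
Qed.

Lemma theta_step_closer x y p q : e x y -> theta_step e p q ->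
  closer x y p.1 != closer x y p.2 -> closer x y q.1 != closer x y q.2.
Proof.
move=> exy /orP [/andP [/eqP -> _] | ]; first by rewrite eq_sym.
case: p q => [p1 p2] [q1 q2]; rewrite /opp_sq /=.
case/and5P=> ep1p2 eq1q2 ep1q1 ep2q2.
rewrite !inE !negb_or => /and4P [/and3P [_ _ p1q2] /andP [p2q1 _] _ _].
have sq : square p1 p2 q2 q1 by split=> //; rewrite esym.
have eyx : e y x by rewrite esym.
have sq' := square_swap sq.
have yxE s : closer y x s = ~~ closer x y s by exact: closerNC.
case xp1: (closer x y p1); case xp2: (closer x y p2) => // _.
- have := square_across exy sq xp1 (negbT xp2).
  have := square_across eyx sq' (_ : closer y x p2) (_ : ~~ closer y x p1).
  by rewrite !yxE xp1 xp2 !negbK => /(_ isT isT) -> /negbTE ->.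
- have := square_across exy sq' xp2 (negbT xp1).
  have := square_across eyx sq (_ : closer y x p1) (_ : ~~ closer y x p2).
  by rewrite !yxE xp1 xp2 !negbK => /(_ isT isT) -> /negbTE ->.
Qed.

Lemma theta_closer x y p q : e x y -> theta e (x, y) (p, q) ->
  closer x y p != closer x y q.
Proof.
move=> exy xy_pq.
apply: (connect_invariant (P := fun pq => closer x y pq.1 != closer x y pq.2)
  _ xy_pq); first by move=> ?? Pa /(theta_step_closer exy); apply.
by rewrite /closer /= distxx (dist_edge exy) distC (dist_edge exy) distxx.
Qed.

Lemma closer_in_halfspace x y w : e x y -> closer x y w -> w \in halfspace e x y.
Proof.
move=> exy; rewrite inE; move Dn: (d x w) => n; elim: n w Dn => [|n IHn] w.
  by move/dist0_eq=> <- _; exact: connect0.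
move=> dxw xw; have [z [ewz dzx]] := dist_geodesic_step (etrans (distC w x) dxw).
have ezw : e z w by rewrite esym.
have dxz : d x z = n by rewrite distC.
have := closer_dist exy xw; have := dist_triangle y z w; rewrite (dist_edge ezw).
move=> *; have xz : closer x y z by rewrite /closer; lia.
apply: connect_trans (IHn z dxz xz) (connect1 _).
by rewrite ezw /=; apply/negP => /(theta_closer exy); rewrite xz xw.
Qed.

Lemma ladder_of_closer v0 x u : e v0 x -> closer x v0 u -> in_ladder e v0 u v0 x.
Proof.
move=> ev0x xu; split=> //; split; last by exists x; split=> //; exact: connect0.
left; split; first by rewrite inE connect0.
by apply: closer_in_halfspace; rewrite // esym.
Qed.

Lemma closer_interval v0 x m u :
  e v0 x -> d x m < d v0 m -> m \in interval e v0 u -> closer x v0 u.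
Proof.
move=> ev0x xm; rewrite inE /closer => /eqP v0mu.
have := edge_dist_cases m ev0x; have := dist_triangle x m u.
by rewrite (distC m x) (distC m v0); lia.
Qed.

End MedianGraph.

Theorem mainTheorem12 (T : finType) (e : rel T) (v0 u v : T) :
  simple_graph e -> connected_graph e -> median_graph e -> in_U3 e ->
  3 <= #|T| ->
  in_all_majority e v0 ->
  (forall w, in_all_majority e w -> w = v0) ->
  u != v0 -> v != v0 ->
  (forall a b, ~ (in_ladder e v0 u a b /\ in_ladder e v0 v a b)) ->
  v0 \in interval e u v.
Proof.
move=> Hs Hc Hm _ _ _ _ _ _ no_common_ladder.
set M := interval e u v :&: interval e v v0 :&: interval e v0 u.
have [M0|[m]] := set_0Vmem M; first by have := Hm u v v0; rewrite -/M M0 cards0.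
rewrite /M (intervalC Hs Hc v) !in_setI -andbA => /and3P [muv mv0v mv0u].
have [<-//|m_neq_v0] := eqVneq m v0.
case dv0m: (dist e v0 m) => [|k].
  by rewrite (dist0_eq Hc dv0m) eqxx in m_neq_v0.
have [x [ev0x dxm]] := dist_geodesic_step Hs Hc dv0m.
have xm : dist e x m < dist e v0 m by rewrite dv0m dxm.
case: (no_common_ladder v0 x); split; apply: ladder_of_closer => //.
  exact: closer_interval ev0x xm mv0u.
exact: closer_interval ev0x xm mv0v.
Qed.
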